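(* Let $m,a,b,t\in\mathbb{N}$ with $m\geq 3$, $a\geq 1$, $t\in\{2,\ldots,m-1\}$ and $(t-1)(am+1)<bm+t<t(am+1)$, and let $S=\langle m,\ am+1,\ bm+t\rangle$ (a MANS-semigroup with embedding dimension $3$). Then \[ \mathrm{F}(S)=r(am+1)+q(bm+t)-m, \] where $q=\left\lfloor\frac{m-1}{t}\right\rfloor$ and $r=(m-1)\bmod t$.
   Context: $\mathbb{N}=\{0,1,2,\ldots\}$. $\langle A\rangle$ is the submonoid of $(\mathbb{N},+)$ generated by $A$; a numerical semigroup is a submonoid of $\mathbb{N}$ with finite complement. $\mathrm{F}(S)$, the Frobenius number, is the greatest integer not in $S$. A MANS-semigroup is a numerical semigroup with $w(1)<\cdots<w(\mathrm{m}(S)-1)$, where $\mathrm{m}(S)$ is the least element of $S\setminus\{0\}$ and $w(i)$ the least element of $S$ congruent to $i$ modulo $\mathrm{m}(S)$. $a\bmod b$ is the remainder of the division of $a$ by $b$. *)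

From mathcomp Require Import all_boot.
Set Implicit Arguments. Unset Strict Implicit. Unset Printing Implicit Defensive.

Inductive gen_monoid (A : nat -> Prop) : nat -> Prop :=
  | gen_monoid0 : gen_monoid A 0
  | gen_monoid_add a x : A a -> gen_monoid A x -> gen_monoid A (a + x).

Definition is_frobenius (S : nat -> Prop) (f : nat) : Prop :=
  ~ S f /\ (forall x : nat, f < x -> S x).

Definition S3 (m a b t : nat) : nat -> Prop :=
  gen_monoid (fun x => x = m \/ x = a * m + 1 \/ x = b * m + t).

(* Put g1 = am + 1 and g2 = bm + t, so g1 = 1 and g2 = t modulo m, and write
   c(i) = a (i mod t) + b (i div t). The bounds on bm + t say (t - 1)a <= b < ta.
   Since b <= ta, a combination y g1 + z g2 = m (ay + bz) + (y + zt) can trade t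
   copies of g1 for one g2 without increasing ay + bz, so the least element of
   S in the residue class of i < m is w(i) = m c(i) + i. Since (t - 1)a <= b,
   c is nondecreasing, so w(m - 1) is the largest of them and
   F(S) = w(m - 1) - m = m c(m - 1) - 1. *)
From mathcomp Require Import all_boot.
From mathcomp Require Import zify.

Set Implicit Arguments.
Unset Strict Implicit.

Lemma gen_monoid_mulD (A : nat -> Prop) g k x :
  A g -> gen_monoid A x -> gen_monoid A (k * g + x).
Proof.
move=> Ag Ax; elim: k => [|k IHk]; first by rewrite mul0n.
by rewrite mulSn -addnA; apply: gen_monoid_add.
Qed.

Lemma S3P m a b t x :
  S3 m a b t x <->
  exists u y z, x = u * m + y * (a * m + 1) + z * (b * m + t).
Proof.
split.
- elim=> [|g x' gen_g _ [u [y [z ->]]]]; first by exists 0, 0, 0.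
  case: gen_g => [->|[->|->]]; [exists u.+1, y, z | exists u, y.+1, z
    | exists u, y, z.+1]; rewrite mulSn; lia.
- move=> [u [y [z ->]]]; rewrite -[_ + z * _]addn0 -!addnA.
  apply: gen_monoid_mulD; first by left.
  apply: gen_monoid_mulD; first by right; left.
  apply: gen_monoid_mulD; first by right; right.
  exact: gen_monoid0.
Qed.

Definition cost (a b t i : nat) : nat := a * (i %% t) + b * (i %/ t).

Lemma cost_apery m a b t i :
  (i %% t) * (a * m + 1) + (i %/ t) * (b * m + t) = m * cost a b t i + i.
Proof. by rewrite /cost {5}(divn_eq i t); nia. Qed.

Lemma cost_small a b t i : i < t -> cost a b t i = a * i.
Proof. by move=> lt_it; rewrite /cost modn_small // divn_small // muln0 addn0. Qed.

Lemma cost_homo a b t : 0 < t -> (t - 1) * a <= b ->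
  {homo cost a b t : i j / i <= j}.
Proof.
move=> t_gt0 lb_b i j le_ij; rewrite /cost.
have lt_it : i %% t < t by rewrite ltn_pmod.
have ei := divn_eq i t; have ej := divn_eq j t.
have [lt_q | ge_q] := ltnP (i %/ t) (j %/ t).
- have ar : a * (i %% t) <= (t - 1) * a by rewrite mulnC leq_mul2r; lia.
  have bq : b * (i %/ t).+1 <= b * (j %/ t) by rewrite leq_mul2l lt_q orbT.
  rewrite mulnS in bq; lia.
- have eq_q : i %/ t = j %/ t by apply/eqP; rewrite eqn_leq ge_q leq_div2r.
  rewrite eq_q leq_add2r leq_mul2l; apply/orP; right.
  by rewrite eq_q in ei; lia.
Qed.

Lemma cost_le_lincomb a b t y z :
  b <= t * a -> cost a b t (y + z * t) <= a * y + b * z.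
Proof.
move=> ub_b; rewrite /cost.
have [->|t_gt0] := posnP t; first by rewrite muln0 addn0 modn0 divn0 muln0; lia.
rewrite [y + _]addnC modnMDl divnMDl // mulnDr.
have trade : b * (y %/ t) <= a * (y %/ t * t).
  by rewrite mulnCA [b * _]mulnC leq_mul2l mulnC ub_b orbT.
rewrite {3}(divn_eq y t) mulnDr; lia.
Qed.

Lemma S3_coef_bounds m a b t : 0 < m ->
  (t - 1) * (a * m + 1) < b * m + t -> b * m + t < t * (a * m + 1) ->
  (t - 1) * a <= b /\ b < t * a.
Proof.
move=> m_gt0 lo hi; split.
- rewrite -(leq_pmul2r m_gt0); rewrite mulnDr muln1 mulnA in lo; lia.
- rewrite -(ltn_pmul2r m_gt0); rewrite mulnDr muln1 mulnA in hi; lia.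
Qed.

Section Frobenius.

Variables m a b t : nat.
Hypotheses (m_gt0 : 0 < m) (t_gt0 : 0 < t) (lb_b : (t - 1) * a <= b).

Lemma S3_apery i : S3 m a b t (m * cost a b t i + i).
Proof. by rewrite -cost_apery; apply/S3P; exists 0, (i %% t), (i %/ t). Qed.

Lemma S3_ge_frob x : m * cost a b t (m - 1) <= x -> S3 m a b t x.
Proof.
move=> le_x; set i := x %% m; set c := x %/ m.
have ex : x = c * m + i by apply: divn_eq.
have lt_im : i < m by rewrite ltn_pmod.
have le_ci : cost a b t i <= cost a b t (m - 1) by apply: cost_homo; lia.
have le_c : cost a b t (m - 1) <= c.
  by rewrite -(mulKn (cost a b t (m - 1)) m_gt0) leq_div2r.
have -> : x = (c - cost a b t i) * m + (m * cost a b t i + i).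
  by rewrite mulnBl ex; nia.
by apply: gen_monoid_mulD; [left | exact: S3_apery].
Qed.

Hypothesis ub_b : b <= t * a.

Lemma S3_frob_notin :
  0 < cost a b t (m - 1) -> ~ S3 m a b t (m * cost a b t (m - 1) - 1).
Proof.
set P := cost a b t (m - 1) => P_gt0 /S3P [u [y [z e]]].
set K := u + a * y + b * z; set n := y + z * t.
have eK : K * m + n.+1 = P * m.
  have mP_gt0 : 0 < m * P by rewrite muln_gt0 m_gt0.
  rewrite [P * m]mulnC -(subnK mP_gt0) e /K /n; nia.
have le_mn : m - 1 <= n.
  rewrite leqNgt; apply/negP => lt_nm.
  have := congr1 (modn^~ m) eK; rewrite /= modnMDl modnMl modn_small //; lia.
have le_PK : P <= K.
  apply: leq_trans (cost_homo t_gt0 lb_b le_mn) _.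
  by apply: leq_trans (cost_le_lincomb y z ub_b) _; rewrite /K; lia.
by move: eK; rewrite -(leq_pmul2r m_gt0) in le_PK; lia.
Qed.

End Frobenius.

Theorem proposition3p9 (m a b t : nat) :
  3 <= m -> 1 <= a -> 2 <= t -> t <= m - 1 ->
  (t - 1) * (a * m + 1) < b * m + t -> b * m + t < t * (a * m + 1) ->
  is_frobenius (S3 m a b t)
    (((m - 1) %% t) * (a * m + 1) + ((m - 1) %/ t) * (b * m + t) - m).
Proof.
move=> m_ge3 a_gt0 t_ge2 _ lo hi.
have m_gt0 : 0 < m by lia.
have t_gt0 : 0 < t by lia.
have [lb_b lt_b] := S3_coef_bounds m_gt0 lo hi.
have P_gt0 : 0 < cost a b t (m - 1).
  apply: leq_trans (cost_homo t_gt0 lb_b (_ : 1 <= m - 1)); last by lia.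
  by rewrite cost_small // muln1.
rewrite cost_apery (_ : _ + (m - 1) - m = m * cost a b t (m - 1) - 1); last by lia.
split; first exact: S3_frob_notin (ltnW lt_b) P_gt0.
by move=> x lt_x; apply: S3_ge_frob; lia.
Qed.
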